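(* Fix a time step $k$ and suppose the predicted density of the augmented set of trajectories is a Poisson multi-Bernoulli (PMB) density $\widetilde f_{k|k-1}(\widetilde{\mathbf{X}}_k)=\widetilde f^p_{k|k-1}(\widetilde{\mathbf{Y}}_k)\prod_{i=1}^{n_{k|k-1}}\widetilde f^i_{k|k-1}(\widetilde{\mathbf{X}}^i_k)$ with Poisson intensity $\lambda_{k|k-1}$ and Bernoulli components with existence probabilities $r^i_{k|k-1}$ and single-trajectory densities $f^i_{k|k-1}$. Let $\mathbf{z}_k=\{z_k^1,\dots,z_k^{m_k}\}$ and suppose each trajectory generates measurements according to the Poisson likelihood $\ell_k(\mathbf{w}_k|X)=e^{-\gamma_k(X)}\prod_{z\in\mathbf{w}_k}\gamma_k(X)\ell_k(z|X)$, with $\gamma_k(t,x^{1:\nu})=\gamma_k(x^\nu)\delta_k[t+\nu-1]$ and $\ell_k(z|t,x^{1:\nu})=\ell_k(z|x^\nu)\delta_k[t+\nu-1]$. Let $n_{k|k}=n_{k|k-1}+m_k$. Then the joint posterior of the augmented set of trajectories and the measurement-oriented association vector satisfies $$\widetilde f_{k|k}(\widetilde{\mathbf{X}}_k,\beta_k)\propto\widetilde f^p_{k|k}(\widetilde{\mathbf{Y}}_k)\prod_{i=1}^{n_{k|k-1}}\Big[\underline{f}^i_{k|k-1}(\widetilde{\mathbf{X}}^i_k)\prod_{j=1}^{m_k}\underline{s}_k(\widetilde{\mathbf{X}}^i_k,\beta^j_k;z^j_k)\Big]\times\prod_{i=n_{k|k-1}+1}^{n_{k|k}}\Big[\overline{f}^i_{k|k-1}(\widetilde{\mathbf{X}}^i_k)\,\overline{s}_k(\widetilde{\mathbf{X}}^i_k,\beta^{i-n_{k|k-1}}_k;z^{i-n_{k|k-1}}_k)\prod_{j=1}^{i-n_{k|k-1}-1}\underline{s}_k(\widetilde{\mathbf{X}}^i_k,\beta^j_k;z^j_k)\Big],$$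 where, writing $\widetilde{\mathbf{X}}$ for a set of augmented trajectories, $\underline{f}^i_{k|k-1}(\widetilde{\mathbf{X}})=r^i_{k|k-1}f^i_{k|k-1}(X)e^{-\gamma_k(X)}\delta_i[u]$ if $\widetilde{\mathbf{X}}=\{(u,X)\}$, $=1-r^i_{k|k-1}$ if $\widetilde{\mathbf{X}}=\emptyset$, and $0$ otherwise; $\overline{f}^i_{k|k-1}(\widetilde{\mathbf{X}})=\lambda_{k|k-1}(X)e^{-\gamma_k(X)}\delta_i[u]$ if $\widetilde{\mathbf{X}}=\{(u,X)\}$, $=1$ if $\widetilde{\mathbf{X}}=\emptyset$, and $0$ otherwise; $\underline{s}_k(\widetilde{\mathbf{X}}^i_k,\beta^j_k;z^j_k)=\frac{\ell_k(z^j_k|X)\gamma_k(X)}{\lambda^C_k(z^j_k)}\delta_i[u]$ if $\widetilde{\mathbf{X}}^i_k=\{(u,X)\}$ and $\beta^j_k=i$, $=1$ if $\beta^j_k\ne i$, and $0$ otherwise; $\overline{s}_k(\widetilde{\mathbf{X}}^i_k,\beta^j_k;z^j_k)=\frac{\ell_k(z^j_k|X)\gamma_k(X)}{\lambda^C_k(z^j_k)}\delta_i[u]$ if $\widetilde{\mathbf{X}}^i_k=\{(u,X)\}$ and $\beta^j_k=i$, $=1$ if $\widetilde{\mathbf{X}}^i_k=\emptyset$ and $\beta^j_k\ne i$, and $0$ otherwise; and $\widetilde f^p_{k|k}(\widetilde{\mathbf{Y}})=e^{-\langle\lambda_{k|k},1\rangle}\prod_{(u,X)\in\widetilde{\mathbf{Y}}}\delta_0[u]\lambda_{k|k}(X)$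 with $\lambda_{k|k}(X)=e^{-\gamma_k(X)}\lambda_{k|k-1}(X)$.
   Context: Single-object states lie in a locally compact, Hausdorff, second-countable space $\mathcal{X}$. A trajectory is $X=(t,x^{1:\nu})$ with start time $t$, length $\nu$ and states $x^{1:\nu}\in\mathcal{X}^\nu$, with $0\le t\le k$, $1\le\nu\le k-t+1$; $T_{(k)}$ denotes the space of such trajectories. $\delta_x[\cdot]$ is the Kronecker delta and $\langle f,g\rangle=\int fg$. Clutter measurements at time $k$ form a Poisson point process with intensity $\lambda^C_k$, independent of the objects, and measurements generated by different trajectories are independent. Auxiliary variables: a trajectory is augmented with $u\in\mathbb{U}=\{0,1,\dots,n\}$, giving augmented trajectories $(u,X)$; for a finite set $\widetilde{\mathbf{X}}_k$ of augmented trajectories, $\widetilde{\mathbf{Y}}_k=\{(u,X)\in\widetilde{\mathbf{X}}_k:u=0\}$ and $\widetilde{\mathbf{X}}^i_k=\{(u,X)\in\widetilde{\mathbf{X}}_k:u=i\}$. The augmented predicted PMB density has Poisson part $\widetilde f^p_{k|k-1}(\widetilde{\mathbf{Y}})=e^{-\langle\lambda_{k|k-1},1\rangle}\prod_{(u,X)\in\widetilde{\mathbf{Y}}}\delta_0[u]\lambda_{k|k-1}(X)$ (undetected trajectories) and Bernoulli parts $\widetilde f^i_{k|k-1}(\emptyset)=1-r^i_{k|k-1}$, $\widetilde f^i_{k|k-1}(\{(u,X)\})=r^i_{k|k-1}f^i_{k|k-1}(X)\delta_i[u]$, and $0$ on sets with two or more elements, $i\in\{1,\dots,n_{k|k-1}\}$.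 Bernoulli components of the posterior: components $i\in\{1,\dots,n_{k|k-1}\}$ correspond to the predicted Bernoulli components; component $i=n_{k|k-1}+j$, $j\in\{1,\dots,m_k\}$, represents a potential trajectory detected for the first time at time $k$ whose associated time-$k$ measurements are $z_k^j$ together with a (possibly empty) subset of $\{z_k^1,\dots,z_k^{j-1}\}$. The measurement-oriented association vector is $\beta_k=(\beta^1_k,\dots,\beta^{m_k}_k)$, where $\beta^j_k=i>0$ if and only if $z^j_k$ is associated with the $i$-th Bernoulli component and $\beta^j_k=0$ if $z^j_k$ is clutter; consequently $\beta^j_k\in\{0,1,\dots,n_{k|k-1},n_{k|k-1}+j,\dots,n_{k|k}\}$. $\widetilde f_{k|k}(\widetilde{\mathbf{X}}_k,\beta_k)$ denotes the joint Bayesian posterior (given measurements up to time $k$) of the augmented set of trajectories and $\beta_k$, with auxiliary space $\{0,\dots,n_{k|k}\}$. *)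

From mathcomp Require Import all_boot all_order all_algebra.
From mathcomp Require Import reals.
From mathcomp Require Import sequences.
From mathcomp.analysis Require Import exp.
Set Implicit Arguments. Unset Strict Implicit. Unset Printing Implicit Defensive.
Import Order.TTheory GRing.Theory Num.Theory.
Local Open Scope ring_scope.

(* Trajectories X = (t, x^{1:nu}) : start time t and nonempty state     *)
(* sequence x^1 :: x^{2:nu}; nu = 1 + size of the tail.                 *)
Record traj (Xs : Type) := Traj { tstart : nat; tfirst : Xs; trest : seq Xs }.

Definition tlen (Xs : Type) (X : traj Xs) : nat := (size (trest X)).+1.
Definition tlast (Xs : Type) (X : traj Xs) : Xs := last (tfirst X) (trest X).

Definition kdelta (R : realType) (a b : nat) : R := (a == b)%:R.

Section Model.
Variables (R : realType) (Xs Z : Type).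

Definition aug := (nat * traj Xs)%type.

Definition gammaT (k : nat) (gam : Xs -> R) (X : traj Xs) : R :=
  gam (tlast X) * kdelta R k (tstart X + tlen X - 1).
Definition likT (k : nat) (lik : Z -> Xs -> R) (zz : Z) (X : traj Xs) : R :=
  lik zz (tlast X) * kdelta R k (tstart X + tlen X - 1).

Definition trajlik (k : nat) (gam : Xs -> R) (lik : Z -> Xs -> R)
    (w : seq Z) (X : traj Xs) : R :=
  expR (- gammaT k gam X) * \prod_(zz <- w) (gammaT k gam X * likT k lik zz X).

(* Poisson (clutter) set density e^{-<lamC,1>} prod_{z in w} lamC(z);
   the integral <lamC,1> is supplied by an abstract functional intZ. *)
Definition clutter_dens (intZ : (Z -> R) -> R) (lamC : Z -> R) (w : seq Z) : R :=
  expR (- intZ lamC) * \prod_(zz <- w) lamC zz.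

Definition sublab (i : nat) (Xt : seq aug) : seq aug :=
  [seq a <- Xt | a.1 == i].

(* Poisson density of augmented undetected trajectories:
   e^{-<lam,1>} prod_{(u,X) in Y} delta_0[u] lam(X); the integral <lam,1>
   over the trajectory space is supplied by the abstract functional integ. *)
Definition poisson_aug (integ : (traj Xs -> R) -> R) (lam : traj Xs -> R)
    (Y : seq aug) : R :=
  expR (- integ lam) * \prod_(a <- Y) (kdelta R 0 a.1 * lam a.2).

Definition bern_pred (r : nat -> R) (f : nat -> traj Xs -> R) (i : nat)
    (Y : seq aug) : R :=
  match Y with
  | [::] => 1 - r i
  | [:: a] => r i * f i a.2 * kdelta R i a.1
  | _ => 0
  end.

Definition pmb_pred (integ : (traj Xs -> R) -> R) (lam : traj Xs -> R)
    (n : nat) (r : nat -> R) (f : nat -> traj Xs -> R) (Xt : seq aug) : R :=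
  (all (fun a => a.1 <= n)%N Xt)%:R
  * poisson_aug integ lam (sublab 0 Xt)
  * \prod_(1 <= i < n.+1) bern_pred r f i (sublab i Xt).

(* measurements z^1..z^m are given by z : nat -> Z (indices 1..m);
   beta : nat -> nat gives beta^j for j = 1..m.                          *)

Definition assoc_meas (m : nat) (z : nat -> Z) (beta : nat -> nat) (u : nat)
  : seq Z := [seq z j | j <- iota 1 m & beta j == u].

(* consistency between the posterior augmented set and beta:
   - each measurement with beta^j = i > 0 is generated by the (unique)
     trajectory with auxiliary variable i;
   - at most one trajectory per auxiliary value i > 0;
   - a trajectory with value n+j (first detected at time k) has z^j among
     its measurements (together with the range constraint on beta this
     means z^j is its highest-indexed measurement). *)
Definition assoc_ok (n m : nat) (beta : nat -> nat) (Xt : seq aug) : bool :=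
  [&& all (fun j => (beta j != 0%N) ==> has (fun a => a.1 == beta j) Xt) (iota 1 m),
      all (fun a => (a.1 != 0%N) ==> (count (fun b => b.1 == a.1) Xt <= 1)%N) Xt
    & all (fun a => (n < a.1)%N ==> (beta (a.1 - n)%N == a.1)) Xt].

(* label map from the posterior auxiliary space back to the predicted one:
   newly detected trajectories (u > n) were undetected (u = 0) before. *)
Definition relabel (n : nat) (a : aug) : aug :=
  (if (a.1 <= n)%N then a.1 else 0%N, a.2).

(* joint measurement likelihood of z_k and beta_k given the posterior
   augmented set: trajectory with value u > 0 generates the measurements
   {z^j : beta^j = u}, trajectories with u = 0 generate none, and
   {z^j : beta^j = 0} is clutter. *)
Definition joint_lik (k n m : nat) (gam : Xs -> R) (lik : Z -> Xs -> R)
    (intZ : (Z -> R) -> R) (lamC : Z -> R) (z : nat -> Z) (beta : nat -> nat)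
    (Xt : seq aug) : R :=
  (assoc_ok n m beta Xt)%:R
  * \prod_(a <- Xt) trajlik k gam lik
        (if a.1 == 0%N then [::] else assoc_meas m z beta a.1) a.2
  * clutter_dens intZ lamC (assoc_meas m z beta 0).

(* unnormalised Bayesian joint posterior (Bayes numerator):
   f~_{k|k}(X~_k, beta_k) is proportional to this. *)
Definition joint_post (k n m : nat) (integ : (traj Xs -> R) -> R)
    (lam : traj Xs -> R) (r : nat -> R) (f : nat -> traj Xs -> R)
    (gam : Xs -> R) (lik : Z -> Xs -> R) (intZ : (Z -> R) -> R)
    (lamC : Z -> R) (z : nat -> Z) (beta : nat -> nat) (Xt : seq aug) : R :=
  pmb_pred integ lam n r f (map (relabel n) Xt)
  * joint_lik k n m gam lik intZ lamC z beta Xt.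

Definition fund (k : nat) (gam : Xs -> R) (r : nat -> R)
    (f : nat -> traj Xs -> R) (i : nat) (Y : seq aug) : R :=
  match Y with
  | [::] => 1 - r i
  | [:: a] => r i * f i a.2 * expR (- gammaT k gam a.2) * kdelta R i a.1
  | _ => 0
  end.

Definition fover (k : nat) (gam : Xs -> R) (lam : traj Xs -> R)
    (i : nat) (Y : seq aug) : R :=
  match Y with
  | [::] => 1
  | [:: a] => lam a.2 * expR (- gammaT k gam a.2) * kdelta R i a.1
  | _ => 0
  end.

Definition sund (k : nat) (gam : Xs -> R) (lik : Z -> Xs -> R)
    (lamC : Z -> R) (i : nat) (Y : seq aug) (bj : nat) (zj : Z) : R :=
  if bj == i then
    match Y with
    | [:: a] => likT k lik zj a.2 * gammaT k gam a.2 / lamC zj * kdelta R i a.1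
    | _ => 0
    end
  else 1.

Definition sover (k : nat) (gam : Xs -> R) (lik : Z -> Xs -> R)
    (lamC : Z -> R) (i : nat) (Y : seq aug) (bj : nat) (zj : Z) : R :=
  if bj == i then
    match Y with
    | [:: a] => likT k lik zj a.2 * gammaT k gam a.2 / lamC zj * kdelta R i a.1
    | _ => 0
    end
  else
    match Y with
    | [::] => 1
    | _ => 0
    end.

Definition lam_upd (k : nat) (gam : Xs -> R) (lam : traj Xs -> R)
    (X : traj Xs) : R := expR (- gammaT k gam X) * lam X.

Definition prop3_rhs (k n m : nat) (integ : (traj Xs -> R) -> R)
    (lam : traj Xs -> R) (r : nat -> R) (f : nat -> traj Xs -> R)
    (gam : Xs -> R) (lik : Z -> Xs -> R) (lamC : Z -> R)
    (z : nat -> Z) (beta : nat -> nat) (Xt : seq aug) : R :=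
  poisson_aug integ (lam_upd k gam lam) (sublab 0 Xt)
  * \prod_(1 <= i < n.+1)
      (fund k gam r f i (sublab i Xt)
       * \prod_(1 <= j < m.+1) sund k gam lik lamC i (sublab i Xt) (beta j) (z j))
  * \prod_(n.+1 <= i < (n + m).+1)
      (fover k gam lam i (sublab i Xt)
       * sover k gam lik lamC i (sublab i Xt) (beta (i - n)%N) (z (i - n)%N)
       * \prod_(1 <= j < (i - n)%N) sund k gam lik lamC i (sublab i Xt) (beta j) (z j)).

End Model.

From mathcomp Require Import all_boot all_order all_algebra.
From mathcomp Require Import reals.
From mathcomp Require Import sequences.
From mathcomp.analysis Require Import exp.
From mathcomp Require Import ring zify.
Set Implicit Arguments. Unset Strict Implicit. Unset Printing Implicit Defensive.
Import Order.TTheory GRing.Theory Num.Theory.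
Local Open Scope ring_scope.

(* Group the trajectories of X~_k by their auxiliary variable u = 0, ..., n + m
   and the measurements z^j by beta^j.  The relabelled predicted PMB density,
   the consistency indicator of (X~_k, beta_k) and the measurement likelihood
   then all factorise over u, and so does the right-hand side.  For u = 0 the
   Poisson factor times the misdetection probabilities e^{-gamma} is the Poisson
   factor with intensity lambda_{k|k}.  For u > 0 each measurement assigned to u
   contributes gamma(X) l(z|X), which is the corresponding s-factor times the
   clutter intensity lambda^C(z) that the clutter density no longer provides;
   inconsistent configurations make both sides vanish label by label.  What is
   left, e^{-<lambda_{k|k-1},1>} e^{-<lambda^C,1>} prod_j lambda^C(z^j) divided by
   e^{-<lambda_{k|k},1>}, does not depend on (X~_k, beta_k). *)

Lemma big_nat_partition (R : Type) (idx : R) (op : Monoid.com_law idx)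
    (I : Type) (s : seq I) (P : pred I) (key : I -> nat) (N : nat) (F : I -> R) :
  all (fun x => key x < N)%N s ->
  \big[op/idx]_(x <- s | P x) F x =
  \big[op/idx]_(0 <= i < N) \big[op/idx]_(x <- s | P x && (key x == i)) F x.
Proof.
elim: s => [_|x s IHs /andP[kx ks]].
  by rewrite big_nil big1 // => i _; rewrite big_nil.
rewrite big_cons IHs //; under [RHS]eq_bigr do rewrite big_cons.
case: (P x) => //=.
transitivity (\big[op/idx]_(0 <= i < N) op (if key x == i then F x else idx)
    (\big[op/idx]_(y <- s | P y && (key y == i)) F y)).
  rewrite big_split /= -big_mkcond (eq_bigl (pred1 (key x)) (P1 := fun i => key x == i)).
    by rewrite big_nat1_eq kx.
  by move=> i; exact: eq_sym.
by apply: eq_bigr => i _; case: ifP; rewrite ?Monoid.mul1m.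
Qed.

Lemma natr_all (R : pzSemiRingType) (T : Type) (P : pred T) (s : seq T) :
  (all P s)%:R = \prod_(x <- s) (P x)%:R :> R.
Proof.
by elim: s => [|x s IHs]; rewrite ?big_nil ?big_cons //= -IHs -natrM mulnb.
Qed.

Section Posterior.
Variables (R : realType) (Xs Z : Type) (k n m : nat).
Variables (gam : Xs -> R) (lik : Z -> Xs -> R) (lamC : Z -> R) (z : nat -> Z).
Variable beta : nat -> nat.

Lemma big_assoc_meas u (F : Z -> R) :
  \prod_(zz <- assoc_meas m z beta u) F zz =
  \prod_(1 <= j < m.+1 | beta j == u) F (z j).
Proof. by rewrite big_map big_filter /index_iota subn1. Qed.

Lemma trajlik_assoc_meas u X :
  trajlik k gam lik (assoc_meas m z beta u) X =
  expR (- gammaT k gam X) *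
  \prod_(1 <= j < m.+1 | beta j == u) (gammaT k gam X * likT k lik (z j) X).
Proof. by rewrite /trajlik big_assoc_meas. Qed.

Lemma clutter_dens_assoc_meas intZ :
  clutter_dens intZ lamC (assoc_meas m z beta 0) =
  expR (- intZ lamC) * \prod_(1 <= j < m.+1 | beta j == 0%N) lamC (z j).
Proof. by rewrite /clutter_dens big_assoc_meas. Qed.

(* Vanishes unless [S] is a singleton, like the s-factors, so that all cases
   share one formula. *)
Definition detect_lik (S : seq (aug Xs)) (zz : Z) : R :=
  if S is [:: a] then gammaT k gam a.2 * likT k lik zz a.2 else 0.

Lemma sundE i S bj zj : all (fun a => a.1 == i) S ->
  sund k gam lik lamC i S bj zj =
  if bj == i then detect_lik S zj / lamC zj else 1.
Proof.
rewrite /sund; case: eqP => // _; case: S => [|a [|b t]] //=; rewrite ?mul0r //.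
by rewrite andbT => /eqP ->; rewrite /kdelta eqxx mulr1 (mulrC (likT _ _ _ _)).
Qed.

Lemma soverE i S bj zj : all (fun a => a.1 == i) S ->
  sover k gam lik lamC i S bj zj =
  if bj == i then detect_lik S zj / lamC zj else (nilp S)%:R.
Proof.
move=> Si; rewrite /sover; case: eqP => [_|_]; last by case: S {Si}.
by have := sundE i zj Si; rewrite /sund eqxx.
Qed.

Lemma prod_lamC_sund (s : seq nat) i S :
  all (fun a => a.1 == i) S -> {in s, forall j, lamC (z j) != 0} ->
  \prod_(j <- s | beta j == i) lamC (z j) *
  \prod_(j <- s) sund k gam lik lamC i S (beta j) (z j) =
  \prod_(j <- s | beta j == i) detect_lik S (z j).
Proof.
move=> Si lamC_neq0; rewrite (eq_bigr _ (fun j _ => sundE (beta j) (z j) Si)).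
rewrite -big_mkcond -big_split big_seq_cond [RHS]big_seq_cond /=.
by apply: eq_bigr => j /andP[/lamC_neq0 ? _]; rewrite mulrC divfK.
Qed.

Lemma prod_detect_lik_nil (s : seq nat) i :
  \prod_(j <- s | beta j == i) detect_lik [::] (z j) =
  (~~ has (fun j => beta j == i) s)%:R.
Proof.
rewrite (eq_bigr (fun=> 0)) // big_const_seq has_count.
by case: count => //= c; rewrite mul0r.
Qed.

Lemma prod_label_until j0 i (F : nat -> R) : (1 <= j0 <= m)%N ->
  (forall j, (j0 < j <= m)%N -> beta j != i) ->
  \prod_(1 <= j < m.+1 | beta j == i) F j =
  \prod_(1 <= j < j0 | beta j == i) F j * (if beta j0 == i then F j0 else 1).
Proof.
move=> /andP[j0_gt0 j0_le] no_later.
rewrite (@big_cat_nat _ _ _ j0.+1) //=.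
rewrite [X in _ * X]big_nat_cond [X in _ * X]big1 ?mulr1; last first.
  move=> j /andP[/andP[j0j jm] /eqP bj].
  suff: beta j != i by rewrite bj eqxx.
  by apply: no_later; lia.
by rewrite big_mkcond big_nat_recr //= -big_mkcond.
Qed.

(* The conditions of [assoc_ok] that involve the trajectories labelled [i]. *)
Definition label_ok i (S : seq (aug Xs)) : bool :=
  [&& size S <= 1, has (fun j => beta j == i) (index_iota 1 m.+1) ==> ~~ nilp S
    & (n < i) && ~~ nilp S ==> (beta (i - n) == i)]%N.

Lemma low_label_factor (r : nat -> R) (f : nat -> traj Xs -> R) i S :
  (i <= n)%N -> all (fun a => a.1 == i) S ->
  {in index_iota 1 m.+1, forall j, lamC (z j) != 0} ->
  (label_ok i S)%:R * bern_pred r f i S *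
  \prod_(a <- S) trajlik k gam lik (assoc_meas m z beta i) a.2 =
  \prod_(1 <= j < m.+1 | beta j == i) lamC (z j) *
  (fund k gam r f i S *
   \prod_(1 <= j < m.+1) sund k gam lik lamC i S (beta j) (z j)).
Proof.
move=> i_le Si lamC_neq0; rewrite mulrCA prod_lamC_sund //.
case: S Si => [_|a [|b t]] /=; rewrite /label_ok /=.
- by rewrite prod_detect_lik_nil big_nil andbF implybF andbT mulr1 mulrC.
- rewrite andbT implybT ltnNge i_le => /eqP ai.
  by rewrite big_seq1 trajlik_assoc_meas ai /kdelta eqxx /=; ring.
- by rewrite !mul0r.
Qed.

Lemma high_label_rhs (lam : traj Xs -> R) i S :
  (n < i <= n + m)%N -> all (fun a => a.1 == i) S ->
  {in index_iota 1 m.+1, forall j, lamC (z j) != 0} ->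
  (forall j, (i - n < j <= m)%N -> beta j != i) ->
  \prod_(1 <= j < m.+1 | beta j == i) lamC (z j) *
  (fover k gam lam i S *
   sover k gam lik lamC i S (beta (i - n)) (z (i - n)) *
   \prod_(1 <= j < i - n) sund k gam lik lamC i S (beta j) (z j)) =
  fover k gam lam i S * \prod_(1 <= j < m.+1 | beta j == i) detect_lik S (z j) *
  ((beta (i - n) == i) || nilp S)%:R.
Proof.
move=> i_range Si lamC_neq0 no_later.
have j0_range : (1 <= i - n <= m)%N by lia.
rewrite !(prod_label_until _ j0_range no_later) soverE //.
have lamC_neq0' : {in index_iota 1 (i - n), forall j, lamC (z j) != 0}.
  by move=> j; rewrite mem_index_iota => ?; apply: lamC_neq0; rewrite mem_index_iota; lia.
have lamC_j0 : lamC (z (i - n)) != 0 by apply: lamC_neq0; rewrite mem_index_iota; lia.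
by rewrite -(prod_lamC_sund Si lamC_neq0'); case: eqP => _ /=; [field | ring].
Qed.

Lemma high_label_factor (lam : traj Xs -> R) i S :
  (n < i <= n + m)%N -> all (fun a => a.1 == i) S ->
  {in index_iota 1 m.+1, forall j, lamC (z j) != 0} ->
  (forall j, (i - n < j <= m)%N -> beta j != i) ->
  (label_ok i S)%:R * \prod_(a <- S) lam a.2 *
  \prod_(a <- S) trajlik k gam lik (assoc_meas m z beta i) a.2 =
  \prod_(1 <= j < m.+1 | beta j == i) lamC (z j) *
  (fover k gam lam i S *
   sover k gam lik lamC i S (beta (i - n)) (z (i - n)) *
   \prod_(1 <= j < i - n) sund k gam lik lamC i S (beta j) (z j)).
Proof.
move=> i_range Si lamC_neq0 no_later; rewrite high_label_rhs //.
have n_lt_i : (n < i)%N by lia.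
case: S Si => [_|a [|b t]] /=; rewrite /label_ok /=.
- by rewrite prod_detect_lik_nil !big_nil andbF implybF orbT andbT !mulr1 mul1r.
- rewrite andbT n_lt_i orbF => /eqP ai.
  by rewrite !big_seq1 trajlik_assoc_meas ai /kdelta eqxx /= implybT; ring.
- by rewrite !mul0r.
Qed.

Lemma label_ok_sublab i (Xt : seq (aug Xs)) :
  label_ok i (sublab i Xt) =
  [&& count_mem i (map fst Xt) <= 1,
      has (fun j => beta j == i) (index_iota 1 m.+1) ==> (i \in map fst Xt)
    & (n < i) && (i \in map fst Xt) ==> (beta (i - n) == i)]%N.
Proof.
have nilpE : ~~ nilp (sublab i Xt) = (i \in map fst Xt).
  by rewrite /nilp size_filter -lt0n -has_count -has_pred1 has_map.
by rewrite /label_ok nilpE size_filter count_map.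
Qed.

Lemma assoc_ok_map_fst (Xt : seq (aug Xs)) :
  assoc_ok n m beta Xt =
  [&& all (fun j => (beta j != 0%N) ==> (beta j \in map fst Xt)) (iota 1 m),
      all (fun u => (u != 0%N) ==> (count_mem u (map fst Xt) <= 1)%N) (map fst Xt)
    & all (fun u => (n < u)%N ==> (beta (u - n) == u)) (map fst Xt)].
Proof.
rewrite /assoc_ok !all_map; congr [&& _, _ & _]; apply: eq_all => a /=.
  by rewrite -has_pred1 has_map.
by rewrite count_map.
Qed.

Lemma assoc_ok_labels (Xt : seq (aug Xs)) :
  all (fun a => a.1 <= n + m)%N Xt ->
  (forall j, (1 <= j <= m)%N -> (beta j <= n + m)%N) ->
  assoc_ok n m beta Xt =
  all (fun i => label_ok i (sublab i Xt)) (index_iota 1 (n + m).+1).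
Proof.
move=> Xt_le beta_le; rewrite assoc_ok_map_fst.
have L_le : all (fun u => u <= n + m)%N (map fst Xt) by rewrite all_map.
apply/and3P/allP => [[meas_ok single_ok new_ok] i|h].
  rewrite mem_index_iota ltnS => /andP[i_gt0 i_le].
  rewrite label_ok_sublab; apply/and3P; split.
  - have [iL|iL] := boolP (i \in map fst Xt); last by rewrite (count_memPn iL).
    by have := allP single_ok i iL; rewrite -lt0n i_gt0.
  - apply/implyP => /hasP[j]; rewrite mem_index_iota => j_range /eqP bj.
    by have := allP meas_ok j; rewrite mem_iota add1n j_range bj -lt0n i_gt0 => /(_ isT).
  - by apply/implyP => /andP[ni iL]; exact: (implyP (allP new_ok i iL) ni).
have ok i : (0 < i <= n + m)%N -> label_ok i (sublab i Xt).
  by move=> i_range; apply: h; rewrite mem_index_iota ltnS.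
split; apply/allP.
- move=> j; rewrite mem_iota add1n => j_range; apply/implyP => bj0.
  have bj_range : (0 < beta j <= n + m)%N by rewrite lt0n bj0 beta_le.
  move/ok: bj_range; rewrite label_ok_sublab => /and3P[_ /implyP has_mem _].
  by apply: has_mem; apply/hasP; exists j; rewrite ?mem_index_iota.
- move=> u uL; apply/implyP => u0.
  have u_range : (0 < u <= n + m)%N by rewrite lt0n u0 (allP L_le).
  by move/ok: u_range; rewrite label_ok_sublab => /and3P[].
- move=> u uL; apply/implyP => nu.
  have u_range : (0 < u <= n + m)%N by rewrite (leq_ltn_trans (leq0n n) nu) (allP L_le).
  move/ok: u_range; rewrite label_ok_sublab => /and3P[_ _ /implyP].
  by apply; rewrite nu uL.
Qed.

Lemma sublab_relabel i (Xt : seq (aug Xs)) : (0 < i <= n)%N ->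
  sublab i (map (relabel n) Xt) = sublab i Xt.
Proof.
move=> /andP[i_gt0 i_le]; rewrite /sublab.
elim: Xt => [|[u X] Xt IHXt] //=; rewrite IHXt /relabel /=.
case: (leqP u n) => // n_lt_u.
by rewrite eq_sym eqn0Ngt i_gt0 gtn_eqF // (leq_ltn_trans i_le n_lt_u).
Qed.

Lemma pmb_pred_relabel (integ : (traj Xs -> R) -> R) (lam : traj Xs -> R)
    (r : nat -> R) (f : nat -> traj Xs -> R) N (Xt : seq (aug Xs)) :
  (n <= N)%N -> all (fun a => a.1 <= N)%N Xt ->
  pmb_pred integ lam n r f (map (relabel n) Xt) =
  expR (- integ lam) * \prod_(a <- sublab 0 Xt) lam a.2 *
  \prod_(1 <= i < n.+1) bern_pred r f i (sublab i Xt) *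
  \prod_(n.+1 <= i < N.+1) \prod_(a <- sublab i Xt) lam a.2.
Proof.
move=> n_le Xt_le.
have undetectedE : \prod_(a <- sublab 0 (map (relabel n) Xt)) (kdelta R 0 a.1 * lam a.2)
    = \prod_(a <- Xt | (a.1 == 0%N) || (n < a.1)%N) lam a.2.
  rewrite /sublab filter_map big_map big_filter; apply: eq_big => [a|a /eqP a0].
    by rewrite /relabel /=; case: leqP; rewrite ?orbF ?orbT.
  by rewrite a0 /kdelta mul1r.
rewrite /pmb_pred all_mapT => [|a]; last by rewrite /relabel /=; case: ifP.
rewrite mulr1n mul1r /poisson_aug undetectedE.
rewrite (eq_big_nat _ _ (F2 := fun i => bern_pred r f i (sublab i Xt))); last first.
  by move=> i i_range; rewrite sublab_relabel.
rewrite (@big_nat_partition _ _ _ _ _ _ (fun a => a.1) N.+1 _ Xt_le) big_ltn //.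
rewrite (@big_cat_nat _ _ _ n.+1) //= [X in _ * (_ * (X * _))]big_nat_cond.
rewrite [X in _ * (_ * (X * _))]big1 ?mul1r; last first.
  move=> i /andP[/andP[i_gt0 i_le] _]; apply: big_pred0 => a.
  by case: (eqVneq a.1 i) => [->|]; rewrite ?andbF // eqn0Ngt i_gt0 ltnNge -ltnS i_le.
rewrite /sublab big_filter (eq_bigl (fun a => a.1 == 0%N)) => [|a]; last first.
  by case: (eqVneq a.1 0%N) => [->|]; rewrite ?andbF.
rewrite (eq_big_nat _ _ (F2 := fun i => \prod_(a <- [seq a <- Xt | a.1 == i]) lam a.2)).
  by rewrite mulrA mulrAC.
move=> i /andP[n_lt_i _]; rewrite big_filter; apply: eq_bigl => a.
by case: (eqVneq a.1 i) => [->|]; rewrite ?andbF // n_lt_i orbT.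
Qed.

Lemma joint_lik_by_label (intZ : (Z -> R) -> R) (Xt : seq (aug Xs)) :
  all (fun a => a.1 <= n + m)%N Xt ->
  (forall j, (1 <= j <= m)%N -> (beta j <= n + m)%N) ->
  joint_lik k n m gam lik intZ lamC z beta Xt =
  \prod_(1 <= i < (n + m).+1) (label_ok i (sublab i Xt))%:R *
  (expR (- intZ lamC) * \prod_(1 <= j < m.+1 | beta j == 0%N) lamC (z j)) *
  \prod_(a <- sublab 0 Xt) expR (- gammaT k gam a.2) *
  \prod_(1 <= i < (n + m).+1)
    \prod_(a <- sublab i Xt) trajlik k gam lik (assoc_meas m z beta i) a.2.
Proof.
move=> Xt_le beta_le.
rewrite /joint_lik assoc_ok_labels // natr_all clutter_dens_assoc_meas.
rewrite (@big_nat_partition _ _ _ _ _ _ (fun a => a.1) (n + m).+1 _ Xt_le) big_ltn //=.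
rewrite [X in _ * (_ * X) * _ = _](eq_big_nat _ _ (F2 := fun i =>
  \prod_(a <- sublab i Xt) trajlik k gam lik (assoc_meas m z beta i) a.2)); last first.
  move=> i /andP[i_gt0 _]; rewrite big_filter; apply: eq_bigr => a /eqP ->.
  by rewrite eqn0Ngt i_gt0.
rewrite [X in _ * (X * _) * _ = _](eq_bigr (fun a => expR (- gammaT k gam a.2))); last first.
  by move=> a /eqP ->; rewrite /trajlik big_nil mulr1.
by rewrite [X in _ = _ * X * _]big_filter; ring.
Qed.

Lemma joint_post_by_label (integ : (traj Xs -> R) -> R) (intZ : (Z -> R) -> R)
    (lam : traj Xs -> R) (r : nat -> R) (f : nat -> traj Xs -> R)
    (Xt : seq (aug Xs)) :
  all (fun a => a.1 <= n + m)%N Xt ->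
  (forall j, (1 <= j <= m)%N -> (beta j <= n + m)%N) ->
  joint_post k n m integ lam r f gam lik intZ lamC z beta Xt =
  expR (- integ lam) * expR (- intZ lamC) *
  \prod_(1 <= j < m.+1 | beta j == 0%N) lamC (z j) *
  \prod_(a <- sublab 0 Xt) lam_upd k gam lam a.2 *
  \prod_(1 <= i < n.+1)
    ((label_ok i (sublab i Xt))%:R * bern_pred r f i (sublab i Xt) *
     \prod_(a <- sublab i Xt) trajlik k gam lik (assoc_meas m z beta i) a.2) *
  \prod_(n.+1 <= i < (n + m).+1)
    ((label_ok i (sublab i Xt))%:R * \prod_(a <- sublab i Xt) lam a.2 *
     \prod_(a <- sublab i Xt) trajlik k gam lik (assoc_meas m z beta i) a.2).
Proof.
move=> Xt_le beta_le.
rewrite /joint_post (pmb_pred_relabel _ _ _ _ (leq_addr m n) Xt_le).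
rewrite joint_lik_by_label // !(@big_cat_nat _ _ _ n.+1 1 (n + m).+1) ?ltnS ?leq_addr //.
by rewrite /lam_upd !big_split /=; ring.
Qed.

Definition bayes_const (integ : (traj Xs -> R) -> R) (intZ : (Z -> R) -> R)
    (lam : traj Xs -> R) : R :=
  expR (- integ lam) * expR (- intZ lamC) * \prod_(1 <= j < m.+1) lamC (z j) /
  expR (- integ (lam_upd k gam lam)).

Lemma bayes_const_gt0 integ intZ lam :
  (forall j, (1 <= j <= m)%N -> 0 < lamC (z j)) -> 0 < bayes_const integ intZ lam.
Proof.
move=> lamC_gt0; rewrite divr_gt0 ?expR_gt0 // !mulr_gt0 ?expR_gt0 // big_seq.
by apply: prodr_gt0 => j; rewrite mem_index_iota ltnS; exact: lamC_gt0.
Qed.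

Lemma prop3_rhs_by_label (integ : (traj Xs -> R) -> R) (intZ : (Z -> R) -> R)
    (lam : traj Xs -> R) (r : nat -> R) (f : nat -> traj Xs -> R)
    (Xt : seq (aug Xs)) :
  (forall j, (1 <= j <= m)%N -> (beta j <= n + m)%N) ->
  bayes_const integ intZ lam * prop3_rhs k n m integ lam r f gam lik lamC z beta Xt =
  expR (- integ lam) * expR (- intZ lamC) *
  \prod_(1 <= j < m.+1 | beta j == 0%N) lamC (z j) *
  \prod_(a <- sublab 0 Xt) lam_upd k gam lam a.2 *
  \prod_(1 <= i < n.+1)
    (\prod_(1 <= j < m.+1 | beta j == i) lamC (z j) *
     (fund k gam r f i (sublab i Xt) *
      \prod_(1 <= j < m.+1) sund k gam lik lamC i (sublab i Xt) (beta j) (z j))) *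
  \prod_(n.+1 <= i < (n + m).+1)
    (\prod_(1 <= j < m.+1 | beta j == i) lamC (z j) *
     (fover k gam lam i (sublab i Xt) *
      sover k gam lik lamC i (sublab i Xt) (beta (i - n)) (z (i - n)) *
      \prod_(1 <= j < i - n) sund k gam lik lamC i (sublab i Xt) (beta j) (z j))).
Proof.
move=> beta_le.
have beta_lt : all (fun j => beta j < (n + m).+1)%N (index_iota 1 m.+1).
  by apply/allP => j; rewrite mem_index_iota ltnS => /beta_le.
rewrite /bayes_const /prop3_rhs /poisson_aug.
rewrite (@big_nat_partition _ _ _ _ _ _ beta (n + m).+1 _ beta_lt) big_ltn //=.
rewrite (@big_cat_nat _ _ _ n.+1 1 (n + m).+1) ?ltnS ?leq_addr // !big_split /=.
have kdelta0 : \prod_(a <- sublab 0 Xt) kdelta R 0 a.1 = 1.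
  by rewrite big_filter big1 // => a /eqP ->.
rewrite kdelta0 mul1r.
by field; rewrite gt_eqF ?expR_gt0.
Qed.

End Posterior.

Theorem proposition3 (R : realType) (Xs Z : Type) (k n m : nat)
    (integ : (traj Xs -> R) -> R) (intZ : (Z -> R) -> R)
    (lam : traj Xs -> R) (r : nat -> R) (f : nat -> traj Xs -> R)
    (gam : Xs -> R) (lik : Z -> Xs -> R) (lamC : Z -> R) (z : nat -> Z)
    (hC : forall j, (1 <= j <= m)%N -> 0 < lamC (z j)) :
  exists2 c : R, 0 < c &
    forall (Xt : seq (aug Xs)) (beta : nat -> nat),
      all (fun a => a.1 <= n + m)%N Xt ->
      (forall j, (1 <= j <= m)%N ->
         (beta j <= n)%N \/ (n + j <= beta j <= n + m)%N) ->
      joint_post k n m integ lam r f gam lik intZ lamC z beta Xt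
      = c * prop3_rhs k n m integ lam r f gam lik lamC z beta Xt.
Proof.
exists (bayes_const k m gam lamC z integ intZ lam); first exact: bayes_const_gt0.
move=> Xt beta Xt_le beta_range.
have beta_le j : (1 <= j <= m)%N -> (beta j <= n + m)%N by move/beta_range; lia.
have lamC_neq0 : {in index_iota 1 m.+1, forall j, lamC (z j) != 0}.
  by move=> j; rewrite mem_index_iota ltnS => /hC /lt0r_neq0.
rewrite joint_post_by_label // prop3_rhs_by_label //; congr (_ * _ * _).
  by apply: eq_big_nat => i /andP[_ i_le]; apply: low_label_factor => //; exact: filter_all.
apply: eq_big_nat => i i_range; apply: high_label_factor => //; first exact: filter_all.
by move=> j j_range; apply/eqP => beta_j; have := beta_range j; lia.
Qed.
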